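(* Let $g\in\mathbb{C}[\alpha,x^{\pm}]^s$ and $\mathcal{A}\subseteq\mathbb{C}^\ell$. Suppose that for some $\alpha^*\in\mathcal{A}$ the system $g_{\alpha^*}(x)=0$ has a nondegenerate solution in $(\mathbb{C}^* )^n$. Then (i) $\mathcal{D}_{g,\mathcal{A}}$ has nonempty Euclidean interior in $\mathcal{A}$; (ii) if in addition $\mathcal{A}$ is locally Zariski dense in $\mathbb{C}^\ell$, then $\mathcal{D}_{g,\mathcal{A}}$ is Zariski dense in $\mathbb{C}^\ell$.
   Context: Let $g\in\mathbb{C}[\alpha_1,\dots,\alpha_\ell,x_1^{\pm1},\dots,x_n^{\pm1}]^s$, $g_\alpha=g(\alpha,\cdot)$, $\mathbb{V}_{\mathbb{C}^*}(g_\alpha)=\{x\in(\mathbb{C}^* )^n: g_\alpha(x)=0\}$, and $\mathcal{D}_{g,\mathcal{A}}=\{\alpha\in\mathcal{A}:\mathbb{V}_{\mathbb{C}^*}(g_\alpha)\neq\emptyset\}$. A solution $x^*$ of a system $h(x)=0$ with $h\in\mathbb{C}[x^{\pm}]^s$ is nondegenerate if the Jacobian matrix $J_h(x^* )$ (with respect to $x$) has rank $s$. A set $X\subseteq\mathbb{C}^m$ is locally Zariski dense if for every Euclidean open $U\subseteq\mathbb{C}^m$ with $U\cap X\neq\emptyset$, the Zariski closure of $U\cap X$ is $\mathbb{C}^m$. *)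

From HB Require Import structures.
From mathcomp Require Import all_boot all_order all_algebra.
From mathcomp Require Import reals.
From mathcomp Require Import complex.
From mathcomp Require Import mpoly.
Set Implicit Arguments. Unset Strict Implicit. Unset Printing Implicit Defensive.
Import Order.TTheory GRing.Theory Num.Theory.
Local Open Scope ring_scope.
Local Open Scope complex_scope.

Section Defs.
Variable R : realType.
Local Notation C := (R[i]).

Definition cball (m : nat) (z : 'I_m -> C) (e : R) : ('I_m -> C) -> Prop :=
  fun w => forall i, `|w i - z i| < e%:C.

Definition euclid_open (m : nat) (U : ('I_m -> C) -> Prop) : Prop :=
  forall z, U z -> exists2 e : R, 0 < e & forall w, cball z e w -> U w.

Definition nonempty_interior_in (m : nat) (D A : ('I_m -> C) -> Prop) : Prop :=
  exists z, A z /\ exists2 e : R, 0 < e &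
    forall w, cball z e w -> A w -> D w.

(* The Zariski closure of X is C^m iff no nonzero polynomial vanishes on X. *)
Definition zariski_dense (m : nat) (X : ('I_m -> C) -> Prop) : Prop :=
  forall p : {mpoly C[m]}, (forall z, X z -> p.@[z] = 0) -> p = 0.

Definition locally_zariski_dense (m : nat) (X : ('I_m -> C) -> Prop) : Prop :=
  forall U : ('I_m -> C) -> Prop, euclid_open U ->
    (exists z, U z /\ X z) -> zariski_dense (fun z => U z /\ X z).

(* ---------- Laurent polynomials in x with polynomial parameters alpha -------
   An element of C[alpha_1..alpha_l, x_1^{+-1}..x_n^{+-1}] is represented as
   p * x^(-d) with p a polynomial in l+n variables (the first l are alpha,
   the last n are x) and d : 'I_n -> nat a monomial shift.  Every Laurent
   polynomial has such a representation. *)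
Record lpoly (l n : nat) := LPoly { lp_num : {mpoly C[l + n]}; lp_shift : 'I_n -> nat }.

Definition joinv (l n : nat) (a : 'I_l -> C) (x : 'I_n -> C) : 'I_(l + n) -> C :=
  fun k => match split k with inl i => a i | inr j => x j end.

Definition xmon (n : nat) (d : 'I_n -> nat) (x : 'I_n -> C) : C :=
  \prod_(j < n) (x j) ^- (d j).

Definition lpeval (l n : nat) (g : lpoly l n) (a : 'I_l -> C) (x : 'I_n -> C) : C :=
  (lp_num g).@[joinv a x] * xmon (lp_shift g) x.

(* partial derivative w.r.t. x_j, evaluated at (alpha, x):
   d/dx_j (p x^-d) = (d_{x_j} p) x^-d - d_j p x^-d x_j^-1 *)
Definition lpderiv_x (l n : nat) (g : lpoly l n) (j : 'I_n)
    (a : 'I_l -> C) (x : 'I_n -> C) : C :=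
  ((lp_num g)^`M(rshift l j)).@[joinv a x] * xmon (lp_shift g) x
  - (lp_shift g j)%:R * (lp_num g).@[joinv a x] * xmon (lp_shift g) x / x j.

Definition torus (n : nat) (x : 'I_n -> C) : Prop := forall j, x j != 0.

Definition is_solution (l n s : nat) (g : 'I_s -> lpoly l n)
    (a : 'I_l -> C) (x : 'I_n -> C) : Prop :=
  torus x /\ forall i, lpeval (g i) a x = 0.

Definition jacobian_x (l n s : nat) (g : 'I_s -> lpoly l n)
    (a : 'I_l -> C) (x : 'I_n -> C) : 'M[C]_(s, n) :=
  \matrix_(i < s, j < n) lpderiv_x (g i) j a x.

Definition nondegenerate_solution (l n s : nat) (g : 'I_s -> lpoly l n)
    (a : 'I_l -> C) (x : 'I_n -> C) : Prop :=
  is_solution g a x /\ \rank (jacobian_x g a x) = s.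

Definition Dset (l n s : nat) (g : 'I_s -> lpoly l n)
    (A : ('I_l -> C) -> Prop) : ('I_l -> C) -> Prop :=
  fun a => A a /\ exists x, is_solution g a x.

End Defs.

From HB Require Import structures.
From mathcomp Require Import all_boot all_order all_algebra.
From mathcomp Require Import reals complex mpoly.
From mathcomp Require Import ring lra classical_sets.
Set Implicit Arguments. Unset Strict Implicit. Unset Printing Implicit Defensive.
Import Order.TTheory GRing.Theory Num.Theory Normc.
Local Open Scope ring_scope.
Local Open Scope complex_scope.

(* The heart of the proof is a quantitative implicit function theorem proved
   with the chord method (a simplified Newton iteration).  If F(alpha, x) is a
   system of polynomials vanishing at (a0, x0) whose x-Jacobian D has a right
   inverse Q, then for alpha near a0 the iteration x <- x - Q F(alpha, x)
   started at x0 converges to a zero of F(alpha, .) near x0.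
   Part (i) of the theorem follows because a whole polydisc around a0 (inside
   A) lies in D_{g,A}; part (ii) follows because local Zariski density of A
   makes that polydisc piece of A Zariski dense. *)

(* The library's real-valued modulus normc, with |z| = (normc z)%:C; working
   with real bounds lets linear arithmetic handle the estimates.  The bounds
   through real and imaginary parts serve to build limits componentwise. *)
Section Modulus.
Variable R : realType.
Local Notation C := R[i].
Implicit Types (x y z : C) (k : R).

Lemma normcE z : `|z| = (normc z)%:C.
Proof. by []. Qed.

Lemma normc_ge0 z : 0 <= normc z.
Proof. by case: z => a b; apply: sqrtr_ge0. Qed.

Lemma normcB x y : normc (x - y) = normc (y - x).
Proof. by rewrite -normcN opprB. Qed.

Lemma normc_sum (I : finType) (F : I -> C) : normc (\sum_i F i) <= \sum_i normc (F i).
Proof.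
elim/big_ind2: _ => [|a b u v hab huv|//]; first by rewrite normc0.
exact: le_trans (le_normcD _ _) (lerD hab huv).
Qed.

Lemma normc_real k : normc k%:C = `|k|.
Proof. by rewrite /normc /= expr0n /= addr0 sqrtr_sqr. Qed.

Lemma Re_le_normc z : `|complex.Re z| <= normc z.
Proof.
case: z => a b; rewrite /normc /= -sqrtr_sqr ler_sqrt ?addr_ge0 ?sqr_ge0 //.
by rewrite lerDl sqr_ge0.
Qed.

Lemma Im_le_normc z : `|complex.Im z| <= normc z.
Proof.
case: z => a b; rewrite /normc /= -sqrtr_sqr ler_sqrt ?addr_ge0 ?sqr_ge0 //.
by rewrite lerDr sqr_ge0.
Qed.

Lemma normc_le_ReIm z : normc z <= `|complex.Re z| + `|complex.Im z|.
Proof.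
rewrite {1}[z]complexE; apply: le_trans (le_normcD _ _) _.
by rewrite normcM !normc_real /normc /= expr0n expr1n add0r sqrtr1 mul1r.
Qed.

End Modulus.

Lemma uniform_radius (R : realType) (I : finType) (P : I -> R -> Prop) :
  (forall i d d', 0 < d' -> d' <= d -> P i d -> P i d') ->
  (forall i, exists2 d, 0 < d & P i d) ->
  exists2 d, 0 < d & forall i, P i d.
Proof.
move=> P_anti P_ex.
suff [d d_gt0 Pd] : exists2 d, 0 < d & forall i, i \in enum I -> P i d.
  by exists d => // i; apply: Pd; rewrite mem_enum.
elim: (enum I) => [|i r [d d_gt0 Pd]]; first by exists 1.
have [di di_gt0 Pdi] := P_ex i.
have m_gt0 : 0 < Num.min d di by rewrite lt_min d_gt0 di_gt0.
exists (Num.min d di) => // j; rewrite inE => /orP[/eqP ->|jr].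
  by apply: P_anti Pdi; rewrite ?ge_min ?lexx ?orbT.
by apply: P_anti (Pd j jr); rewrite ?ge_min ?lexx.
Qed.

Section StrictDifferentiability.
Variable R : realType.
Local Notation C := R[i].
Variables (N : nat) (z0 : 'I_N -> C).

Definition close (d : R) (z : 'I_N -> C) := forall k, normc (z k - z0 k) < d.

Definition dlin (p : {mpoly C[N]}) (h : 'I_N -> C) : C :=
  \sum_k (p^`M(k)).@[z0] * h k.

Definition dnorm (p : {mpoly C[N]}) : R := \sum_k normc ((p^`M(k)).@[z0]).

Definition strictly_diff (p : {mpoly C[N]}) :=
  forall e : R, 0 < e -> exists2 d : R, 0 < d &
    forall z w (t : R), close d z -> close d w -> 0 <= t ->
     (forall k, normc (z k - w k) <= t) ->
     normc (p.@[z] - p.@[w] - dlin p (fun k => z k - w k)) <= e * t.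

Lemma close_center d : 0 < d -> close d z0.
Proof. by move=> d_gt0 k; rewrite subrr normc0. Qed.

Lemma close_le d d' z : d <= d' -> close d z -> close d' z.
Proof. by move=> le_dd' zd k; apply: lt_le_trans (zd k) le_dd'. Qed.

Lemma dnorm_ge0 p : 0 <= dnorm p.
Proof. by apply: sumr_ge0 => k _; apply: normc_ge0. Qed.

Lemma dlin_bound p h t : (forall k, normc (h k) <= t) -> normc (dlin p h) <= dnorm p * t.
Proof.
move=> ht; apply: le_trans (normc_sum _) _.
rewrite /dnorm mulr_suml; apply: ler_sum => k _.
by rewrite normcM ler_wpM2l ?normc_ge0.
Qed.

Lemma dlinD p q h : dlin (p + q) h = dlin p h + dlin q h.
Proof. by rewrite /dlin -big_split; apply: eq_bigr => k _; rewrite mderivD mevalD mulrDl. Qed.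

Lemma dlinM p q h : dlin (p * q) h = q.@[z0] * dlin p h + p.@[z0] * dlin q h.
Proof.
rewrite /dlin !mulr_sumr -big_split; apply: eq_bigr => k _.
by rewrite mderivM mevalD !mevalM mulrDl -!mulrA mulrCA.
Qed.

Lemma strictly_diff_cont p : strictly_diff p -> forall e : R, 0 < e ->
  exists2 d : R, 0 < d & forall z, close d z -> normc (p.@[z] - p.@[z0]) <= e.
Proof.
move=> p_sd e e_gt0; have [d1 d1_gt0 H1] := p_sd 1 ltr01.
have K_gt0 : 0 < dnorm p + 1 by rewrite ltr_wpDl ?dnorm_ge0.
set d := Num.min d1 (e / (dnorm p + 1)).
have d_gt0 : 0 < d by rewrite lt_min d1_gt0 divr_gt0.
exists d => // z zd.
have zd1 : close d1 z by apply: close_le zd; rewrite ge_min lexx.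
have hz k : normc (z k - z0 k) <= d by apply/ltW/zd.
have := H1 z z0 d zd1 (close_center d1_gt0) (ltW d_gt0) hz; rewrite mul1r => Hrem.
rewrite -[p.@[z] - _](subrK (dlin p (fun k => z k - z0 k))).
apply: le_trans (le_normcD _ _) (le_trans (lerD Hrem (dlin_bound p hz)) _).
have : d <= e / (dnorm p + 1) by rewrite ge_min lexx orbT.
by rewrite ler_pdivlMr // mulrDr mulr1 addrC mulrC.
Qed.

Lemma strictly_diffC c : strictly_diff c%:MP.
Proof.
move=> e e_gt0; exists 1 => // z w t _ _ t_ge0 _.
rewrite /dlin big1 ?mevalC ?subrr ?normc0 ?mulr_ge0 ?(ltW e_gt0) //.
by move=> k _; rewrite mderivC meval0 mul0r.
Qed.

Lemma mderivXU_eval (i k : 'I_N) (v : 'I_N -> C) :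
  (('X_i : {mpoly C[N]})^`M(k)).@[v] = (i == k)%:R.
Proof.
rewrite mderivX mnm1E; case: eqP => [->|_]; last by rewrite scale0r meval0.
have -> : (U_(k) - U_(k))%MM = 0%MM :> 'X_{1..N}.
  by apply/mnmP => j; rewrite mnmBE subnn mnm0E.
by rewrite mpolyX0 mevalZ meval1 mulr1.
Qed.

Lemma strictly_diffX i : strictly_diff 'X_i.
Proof.
move=> e e_gt0; exists 1 => // z w t _ _ t_ge0 _.
rewrite /dlin (bigD1 i) //= big1 ?mevalXU.
  by rewrite mderivXU_eval eqxx mul1r addr0 subrr normc0 mulr_ge0 ?(ltW e_gt0).
by move=> k /negbTE ki; rewrite mderivXU_eval eq_sym ki mul0r.
Qed.

Lemma strictly_diffD p q : strictly_diff p -> strictly_diff q -> strictly_diff (p + q).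
Proof.
move=> p_sd q_sd e e_gt0; have e2_gt0 : 0 < e / 2 by rewrite divr_gt0.
have [dp dp_gt0 Hp] := p_sd _ e2_gt0; have [dq dq_gt0 Hq] := q_sd _ e2_gt0.
exists (Num.min dp dq) => [|z w t zd wd t_ge0 ht]; first by rewrite lt_min dp_gt0 dq_gt0.
have le_p : Num.min dp dq <= dp by rewrite ge_min lexx.
have le_q : Num.min dp dq <= dq by rewrite ge_min lexx orbT.
have Bp := Hp z w t (close_le le_p zd) (close_le le_p wd) t_ge0 ht.
have Bq := Hq z w t (close_le le_q zd) (close_le le_q wd) t_ge0 ht.
rewrite dlinD !mevalD.
set rp := _ - _ - dlin p _ in Bp; set rq := _ - _ - dlin q _ in Bq.
have -> : p.@[z] + q.@[z] - (p.@[w] + q.@[w]) - (dlin p (fun k => z k - w k)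
    + dlin q (fun k => z k - w k)) = rp + rq by rewrite /rp /rq; ring.
apply: le_trans (le_normcD _ _) (le_trans (lerD Bp Bq) _).
by rewrite -mulrDl -splitr.
Qed.

Lemma value_bound p d z : normc (p.@[z] - p.@[z0]) <= d -> d <= 1 ->
  normc p.@[z] <= normc p.@[z0] + 1.
Proof.
move=> near_p d_le1; rewrite -[p.@[z]](subrK p.@[z0]) addrC.
by apply: le_trans (le_normcD _ _) _; rewrite lerD2l (le_trans near_p).
Qed.

(* the algebraic identity behind the product rule for remainders *)
Lemma product_remainder (T : comRingType) (pz pw p0 qz qw q0 lp lq : T) :
  pz * qz - pw * qw - (q0 * lp + p0 * lq) = pz * (qz - qw - lq)
    + (pz - p0) * lq + qw * (pz - pw - lp) + (qw - q0) * lp.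
Proof. by ring. Qed.

Lemma strictly_diffM p q : strictly_diff p -> strictly_diff q -> strictly_diff (p * q).
Proof.
move=> p_sd q_sd e e_gt0.
set P := normc p.@[z0]; set Q := normc q.@[z0].
set K := P + Q + 2 + dnorm p + dnorm q.
have K_gt0 : 0 < K.
  by rewrite /K ltr_wpDr ?dnorm_ge0 // ltr_wpDr ?dnorm_ge0 // ltr_wpDl ?addr_ge0 ?normc_ge0.
(* every error term below is at most e1 times a constant summing to K *)
set e1 := Num.min 1 (e / K).
have e1_gt0 : 0 < e1 by rewrite lt_min ltr01 divr_gt0.
have e1_le1 : e1 <= 1 by rewrite ge_min lexx.
have e1K : e1 * K <= e by rewrite -ler_pdivlMr // ge_min lexx orbT.
have [dp dp_gt0 Hp] := p_sd _ e1_gt0; have [dq dq_gt0 Hq] := q_sd _ e1_gt0.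
have [cp cp_gt0 Cp] := strictly_diff_cont p_sd e1_gt0.
have [cq cq_gt0 Cq] := strictly_diff_cont q_sd e1_gt0.
set d := Num.min (Num.min dp dq) (Num.min cp cq).
have [ddp ddq dcp dcq] : [/\ d <= dp, d <= dq, d <= cp & d <= cq].
  by rewrite /d !ge_min !lexx /= !orbT.
exists d => [|z w t zd wd t_ge0 ht]; first by rewrite !lt_min dp_gt0 dq_gt0 cp_gt0 cq_gt0.
set h := fun k => z k - w k.
have Bp := Hp z w t (close_le ddp zd) (close_le ddp wd) t_ge0 ht.
have Bq := Hq z w t (close_le ddq zd) (close_le ddq wd) t_ge0 ht.
have Np := Cp z (close_le dcp zd); have Nq := Cq w (close_le dcq wd).
have Lp := dlin_bound p ht; have Lq := dlin_bound q ht.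
set rp := _ - _ - dlin p h in Bp; set rq := _ - _ - dlin q h in Bq.
rewrite dlinM !mevalM product_remainder -/rp -/rq.
have T1 : normc (p.@[z] * rq) <= (P + 1) * (e1 * t).
  by rewrite normcM; apply: ler_pM (normc_ge0 _) (normc_ge0 _) (value_bound Np e1_le1) Bq.
have T2 : normc ((p.@[z] - p.@[z0]) * dlin q h) <= e1 * (dnorm q * t).
  by rewrite normcM; apply: ler_pM (normc_ge0 _) (normc_ge0 _) Np Lq.
have T3 : normc (q.@[w] * rp) <= (Q + 1) * (e1 * t).
  by rewrite normcM; apply: ler_pM (normc_ge0 _) (normc_ge0 _) (value_bound Nq e1_le1) Bp.
have T4 : normc ((q.@[w] - q.@[z0]) * dlin p h) <= e1 * (dnorm p * t).
  by rewrite normcM; apply: ler_pM (normc_ge0 _) (normc_ge0 _) Nq Lp.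
apply: le_trans (le_trans (le_normcD _ _) (lerD _ T4)) _.
  apply: le_trans (le_normcD _ _) (lerD _ T3).
  exact: le_trans (le_normcD _ _) (lerD T1 T2).
apply: le_trans (_ : e1 * K * t <= e * t); last by rewrite ler_wpM2r.
rewrite /K le_eqVlt; apply/orP; left; apply/eqP.
by move: (e1) (t) (P) (Q) (dnorm p) (dnorm q) => *; ring.
Qed.

(* strictly differentiable polynomials contain constants and variables and are
   closed under sums and products, hence they are all polynomials *)
Lemma strictly_diff_mpoly p : strictly_diff p.
Proof.
have sd_mono m : strictly_diff 'X_[m].
  rewrite (mpolyXE_id C m); apply: (big_ind strictly_diff) => [|u v|i _].
  - by rewrite -mpolyC1; apply: strictly_diffC.
  - exact: strictly_diffM.
  - by elim: (m i) => [|k IHk]; rewrite ?expr0 -?mpolyC1 ?exprS;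
      [apply: strictly_diffC | apply: strictly_diffM (strictly_diffX i) IHk].
elim/mpolyind: p => [|c m p _ _ IHp]; first by rewrite -mpolyC0; apply: strictly_diffC.
by rewrite -mul_mpolyC; apply: strictly_diffD (strictly_diffM (strictly_diffC c) (sd_mono m)) IHp.
Qed.

End StrictDifferentiability.

(* Completeness, in the only form needed: a sequence whose steps are bounded
   by a geometric sequence B / 2^k converges, with explicit error bounds. *)
Section GeometricCauchy.
Variable R : realType.
Local Notation C := R[i].

Definition geom (B : R) (k : nat) : R := B / 2 ^+ k.

Lemma geomS B k : geom B k.+1 * 2 = geom B k.
Proof. by rewrite /geom exprS invfM; field; rewrite expf_eq0 pnatr_eq0 andbF. Qed.

Lemma geom_ge0 B k : 0 <= B -> 0 <= geom B k.
Proof. by move=> B_ge0; rewrite /geom divr_ge0 // exprn_ge0. Qed.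

Lemma geom0 B : geom B 0 = B.
Proof. by rewrite /geom expr0 divr1. Qed.

Lemma geomM c B k : geom (c * B) k = c * geom B k.
Proof. by rewrite /geom mulrA. Qed.

Lemma geom_bound_eq0 (c K : R) : 0 <= c -> (forall k, c <= geom K k) -> c = 0.
Proof.
move=> c_ge0 c_le; apply/eqP; rewrite eq_le c_ge0 andbT leNgt; apply/negP => c_gt0.
set k := Num.Def.archi_bound (K / c).
have : K / c < 2 ^+ k by apply: upper_nthrootP.
rewrite ltr_pdivrMr // ltNge mulrC => /negP; apply.
by rewrite -ler_pdivlMr ?exprn_gt0 //; apply: c_le.
Qed.

Section RealLimit.
Variables (u : nat -> R) (B : R).
Hypothesis B_ge0 : 0 <= B.
Hypothesis u_step : forall k, `|u k.+1 - u k| <= geom B k.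

Lemma geom_telescope k m : `|u (k + m)%N - u k| <= 2 * geom B k - 2 * geom B (k + m)%N.
Proof.
elim: m => [|m IHm]; first by rewrite addn0 subrr normr0 subrr.
have := ler_normD (u (k + m).+1 - u (k + m)%N) (u (k + m)%N - u k).
rewrite addnS addrA subrK; have := u_step (k + m); have := geomS B (k + m); lra.
Qed.

Definition geom_limR : R := sup (fun y => exists k, y = u k - 2 * geom B k).

Lemma geom_limR_spec k : `|u k - geom_limR| <= 2 * geom B k.
Proof.
have lower_upper j m : u j - 2 * geom B j <= u m + 2 * geom B m.
  have [jm|mj] := leqP j m.
    have := geom_telescope j (m - j); rewrite subnKC // ler_norml => /andP[H _].
    by have := geom_ge0 m B_ge0; lra.
  have := geom_telescope m (j - m); rewrite subnKC ?(ltnW mj) // ler_norml => /andP[_ H].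
  by have := geom_ge0 j B_ge0; lra.
have ub m : ubound (fun y => exists j, y = u j - 2 * geom B j) (u m + 2 * geom B m).
  by move=> y [j ->]; apply: lower_upper.
have lim_ge : u k - 2 * geom B k <= geom_limR.
  by apply: ub_le_sup; [exists (u 0%N + 2 * geom B 0); apply: ub | exists k].
have lim_le : geom_limR <= u k + 2 * geom B k.
  by apply: ge_sup; [exists (u 0%N - 2 * geom B 0); exists 0%N | apply: ub].
by rewrite ler_norml; apply/andP; split; lra.
Qed.

End RealLimit.

Definition geom_limC (u : nat -> C) (B : R) : C :=
  Complex (geom_limR (fun k => complex.Re (u k)) B) (geom_limR (fun k => complex.Im (u k)) B).

Lemma geom_limC_spec (u : nat -> C) B : 0 <= B ->
  (forall k, normc (u k.+1 - u k) <= geom B k) ->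
  forall k, normc (u k - geom_limC u B) <= 4 * geom B k.
Proof.
move=> B_ge0 u_step k.
have Re_step j : `|complex.Re (u j.+1) - complex.Re (u j)| <= geom B j.
  by rewrite -raddfB; apply: le_trans (Re_le_normc _) (u_step j).
have Im_step j : `|complex.Im (u j.+1) - complex.Im (u j)| <= geom B j.
  by rewrite -raddfB; apply: le_trans (Im_le_normc _) (u_step j).
apply: le_trans (normc_le_ReIm _) _; rewrite !raddfB /=.
have -> : (4 : R) * geom B k = 2 * geom B k + 2 * geom B k by ring.
exact: lerD (geom_limR_spec B_ge0 Re_step k) (geom_limR_spec B_ge0 Im_step k).
Qed.

End GeometricCauchy.

Section Join.
Variable R : realType.
Local Notation C := R[i].
Variables l n : nat.

Lemma joinv_l (a : 'I_l -> C) (x : 'I_n -> C) i : joinv a x (lshift n i) = a i.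
Proof. by rewrite /joinv -[lshift n i]/(unsplit (inl i)) unsplitK. Qed.

Lemma joinv_r (a : 'I_l -> C) (x : 'I_n -> C) j : joinv a x (rshift l j) = x j.
Proof. by rewrite /joinv -[rshift l j]/(unsplit (inr j)) unsplitK. Qed.

Lemma close_joinv (a0 a : 'I_l -> C) (x0 x : 'I_n -> C) d :
  (forall i, normc (a i - a0 i) < d) -> (forall j, normc (x j - x0 j) < d) ->
  close (joinv a0 x0) d (joinv a x).
Proof. by move=> ha hx k; rewrite /joinv; case: (split k). Qed.

Lemma joinv_dist (a : 'I_l -> C) (x y : 'I_n -> C) (t : R) : 0 <= t ->
  (forall j, normc (x j - y j) <= t) -> forall k, normc (joinv a x k - joinv a y k) <= t.
Proof. by move=> t_ge0 hxy k; rewrite /joinv; case: (split k) => [i|j]; rewrite ?subrr ?normc0. Qed.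

Lemma dlin_joinv z0 (p : {mpoly C[l + n]}) (a : 'I_l -> C) (x y : 'I_n -> C) :
  dlin z0 p (fun k => joinv a x k - joinv a y k) =
  \sum_j (p^`M(rshift l j)).@[z0] * (x j - y j).
Proof.
rewrite /dlin big_split_ord /= big1 ?add0r => [|i _]; last by rewrite !joinv_l subrr mulr0.
by apply: eq_bigr => j _; rewrite !joinv_r.
Qed.

End Join.

(* For alpha
   near a0 the iteration  x <- x - Q F(alpha, x)  started at x0 halves the
   residual at each step (strict differentiability), so its steps decrease
   geometrically and it converges to a zero of F(alpha, .) near x0. *)
Section Chord.
Variable R : realType.
Local Notation C := R[i].
Variables (l n s : nat) (F : 'I_s -> {mpoly C[l + n]}) (a0 : 'I_l -> C)
  (x0 : 'I_n -> C) (Q : 'I_n -> 'I_s -> C).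
Local Notation z0 := (joinv a0 x0).
Hypothesis F_z0 : forall i, (F i).@[z0] = 0.
Hypothesis Q_right_inv : forall i k,
  \sum_j ((F i)^`M(rshift l j)).@[z0] * Q j k = (i == k)%:R.

Definition qnorm : R := 1 + \sum_j \sum_k normc (Q j k).

Lemma qnorm_gt0 : 0 < qnorm.
Proof.
by rewrite /qnorm ltr_pwDl //; do 2!(apply: sumr_ge0 => ? _); apply: normc_ge0.
Qed.

Lemma Q_apply_bound j (v : 'I_s -> C) b : 0 <= b -> (forall k, normc (v k) <= b) ->
  normc (\sum_k Q j k * v k) <= qnorm * b.
Proof.
move=> b_ge0 hv; apply: le_trans (normc_sum _) _.
apply: le_trans (_ : \sum_k normc (Q j k) * b <= _).
  by apply: ler_sum => k _; rewrite normcM ler_wpM2l ?normc_ge0.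
rewrite -mulr_suml ler_wpM2r // /qnorm (bigD1 j) //= addrCA lerDl addr_ge0 //.
by do ?(apply: sumr_ge0 => ? _); apply: normc_ge0.
Qed.

Definition chord_step a (x : 'I_n -> C) : 'I_n -> C :=
  fun j => x j - \sum_k Q j k * (F k).@[joinv a x].

Definition chord_iter a k := iter k (chord_step a) x0.

Lemma chord_step_dlin a x i :
  \sum_j ((F i)^`M(rshift l j)).@[z0] * (chord_step a x j - x j) = - (F i).@[joinv a x].
Proof.
under eq_bigr do rewrite /chord_step addrAC subrr add0r mulrN mulr_sumr.
rewrite sumrN exchange_big /=; congr (- _).
under eq_bigr do rewrite (eq_bigr _ (fun j _ => mulrA _ _ _)) -mulr_suml Q_right_inv.
by rewrite (bigD1 i) //= eqxx mul1r big1 ?addr0 // => k /negbTE; rewrite eq_sym => ->; rewrite mul0r.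
Qed.

Section Convergence.
Variables (a : 'I_l -> C) (r rho : R).
Local Notation M := qnorm.
Local Notation xs := (chord_iter a).
Hypothesis remainder_small : forall i z w (t : R), close z0 r z -> close z0 r w ->
  0 <= t -> (forall k, normc (z k - w k) <= t) ->
  normc ((F i).@[z] - (F i).@[w] - dlin z0 (F i) (fun k => z k - w k)) <= (2 * M)^-1 * t.
Hypothesis a_close : forall i, normc (a i - a0 i) < r.
Hypothesis residual0 : forall i, normc (F i).@[joinv a x0] <= rho.
Hypothesis rho_ge0 : 0 <= rho.
Hypothesis rho_small : 4 * (M * rho) < r.

Lemma M_geom_ge0 k : 0 <= M * geom rho k.
Proof. by rewrite mulr_ge0 ?geom_ge0 ?(ltW qnorm_gt0). Qed.

Lemma close_of_dist x (c : R) : c <= 4 * (M * rho) ->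
  (forall j, normc (x j - x0 j) <= c) -> close z0 r (joinv a x).
Proof.
move=> c_le hx; apply: close_joinv => // j.
exact: le_lt_trans (hx j) (le_lt_trans c_le rho_small).
Qed.

Lemma chord_step_bound k : (forall i, normc (F i).@[joinv a (xs k)] <= geom rho k) ->
  forall j, normc (xs k.+1 j - xs k j) <= M * geom rho k.
Proof.
move=> res_k j; rewrite [xs k.+1]/chord_iter iterS -/(xs k) /chord_step.
by rewrite addrAC subrr add0r normcN; apply: Q_apply_bound => //; apply: geom_ge0.
Qed.

Lemma chord_invariant k :
  (forall i, normc (F i).@[joinv a (xs k)] <= geom rho k) /\
  (forall j, normc (xs k j - x0 j) <= 2 * (M * rho) - 2 * (M * geom rho k)).
Proof.
elim: k => [|k [res_k dist_k]].
  by split=> [i|j]; rewrite geom0 //= subrr normc0 subrr.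
have step_k := chord_step_bound res_k.
have halve : 2 * (M * geom rho k.+1) = M * geom rho k by rewrite -(geomS rho k); ring.
have dist_k1 j : normc (xs k.+1 j - x0 j) <= 2 * (M * rho) - 2 * (M * geom rho k.+1).
  rewrite -[xs k.+1 j - _](subrKA (xs k j)).
  by apply: le_trans (le_normcD _ _) _; have := step_k j; have := dist_k j; lra.
split=> // i.
have iter_close m : 2 * (M * rho) - 2 * (M * geom rho m) <= 4 * (M * rho).
  by have := M_geom_ge0 m; have := M_geom_ge0 0; rewrite geom0; lra.
have := remainder_small i (close_of_dist (iter_close _) dist_k1)
  (close_of_dist (iter_close _) dist_k) (M_geom_ge0 k) (joinv_dist a (M_geom_ge0 k) step_k).
rewrite dlin_joinv chord_step_dlin opprK subrK.
suff -> : (2 * M)^-1 * (M * geom rho k) = geom rho k.+1 by [].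
by rewrite -(geomS rho k); field; rewrite gt_eqF ?qnorm_gt0.
Qed.

Definition chord_limit : 'I_n -> C := fun j => geom_limC (fun k => xs k j) (M * rho).

Lemma chord_limit_dist k j : normc (xs k j - chord_limit j) <= 4 * geom (M * rho) k.
Proof.
apply: (geom_limC_spec (u := fun k => xs k j)) => [|m]; first by rewrite -(geom0 rho) M_geom_ge0.
by rewrite geomM; apply: chord_step_bound; case: (chord_invariant m).
Qed.

Lemma chord_limit_near j : normc (chord_limit j - x0 j) <= 4 * (M * rho).
Proof. by rewrite normcB -(geom0 (M * rho)); apply: chord_limit_dist 0%N j. Qed.

(* the residual at the limit is bounded by every term of a geometric sequence *)
Lemma chord_limit_root i : (F i).@[joinv a chord_limit] = 0.
Proof.
apply: eq0_normc; set K := rho + (dnorm z0 (F i) + (2 * M)^-1) * (4 * (M * rho)).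
apply: (geom_bound_eq0 (K := K) (normc_ge0 _)) => k.
set t := 4 * geom (M * rho) k.
have t_ge0 : 0 <= t by rewrite /t geomM mulr_ge0 ?M_geom_ge0.
have dist_k j : normc (chord_limit j - xs k j) <= t by rewrite normcB chord_limit_dist.
have close_k : close z0 r (joinv a (xs k)).
  apply: close_of_dist (proj2 (chord_invariant k)).
  by have := M_geom_ge0 k; have := M_geom_ge0 0; rewrite geom0; lra.
have Hrem := remainder_small i (close_of_dist (lexx _) chord_limit_near) close_k t_ge0
  (joinv_dist a t_ge0 dist_k).
have Hlin := dlin_bound z0 (F i) (joinv_dist a t_ge0 dist_k).
have Hres := proj1 (chord_invariant k) i.
set Fz := (F i).@[_] in Hrem *; set Fw := (F i).@[joinv a (xs k)] in Hrem Hres.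
set L := dlin _ _ _ in Hrem Hlin.
have -> : geom K k = geom rho k + dnorm z0 (F i) * t + (2 * M)^-1 * t by rewrite /t /K /geom; ring.
have -> : Fz = Fw + L + (Fz - Fw - L) by ring.
exact: le_trans (le_normcD _ _) (lerD (le_trans (le_normcD _ _) (lerD Hres Hlin)) Hrem).
Qed.

End Convergence.

Lemma chord_radius : torus x0 -> exists2 r : R, 0 < r &
  (forall i z w (t : R), close z0 r z -> close z0 r w -> 0 <= t ->
    (forall k, normc (z k - w k) <= t) ->
    normc ((F i).@[z] - (F i).@[w] - dlin z0 (F i) (fun k => z k - w k)) <= (2 * qnorm)^-1 * t)
  /\ (forall j, r <= normc (x0 j)).
Proof.
move=> x0_torus; have eps_gt0 : 0 < (2 * qnorm)^-1 by rewrite invr_gt0 mulr_gt0 ?qnorm_gt0.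
have [dS dS_gt0 HS] := uniform_radius
  (fun i d d' _ le_dd' H z w t zd wd => H z w t (close_le le_dd' zd) (close_le le_dd' wd))
  (fun i => strictly_diff_mpoly z0 (F i) eps_gt0).
have x0_gt0 j : 0 < normc (x0 j).
  by rewrite lt_def normc_ge0 andbT; apply: contraNneq (x0_torus j) => /eq0_normc ->.
have [dT dT_gt0 HT] := uniform_radius (P := fun j d => d <= normc (x0 j))
  (fun j d d' _ le_dd' H => le_trans le_dd' H)
  (fun j => ex_intro2 _ _ (normc (x0 j)) (x0_gt0 j) (lexx _)).
have [r_le_dS r_le_dT] : Num.min dS dT <= dS /\ Num.min dS dT <= dT.
  by split; rewrite ge_min lexx ?orbT.
exists (Num.min dS dT); first by rewrite lt_min dS_gt0 dT_gt0.
split=> [i z w t zr wr|j]; last exact: le_trans r_le_dT (HT j).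
exact: HS i z w t (close_le r_le_dS zr) (close_le r_le_dS wr).
Qed.

Lemma chord_solve : torus x0 -> exists2 e : R, 0 < e &
  forall a, (forall i, normc (a i - a0 i) < e) ->
    exists x, torus x /\ forall i, (F i).@[joinv a x] = 0.
Proof.
move=> x0_torus; have [r r_gt0 [remainder_small r_le_x0]] := chord_radius x0_torus.
have M_gt0 := qnorm_gt0; set M := qnorm in M_gt0 remainder_small *.
set rho := r / (8 * M); have rho_gt0 : 0 < rho by rewrite divr_gt0 // mulr_gt0.
have Mrho : 4 * (M * rho) = r / 2 by rewrite /rho; field; rewrite gt_eqF.
have rho_small : 4 * (M * rho) < r by rewrite Mrho ltr_pdivrMr // ltr_pMr // ltr1n.
have [c c_gt0 Hc] := uniform_radius
  (P := fun i d => forall z, close z0 d z -> normc ((F i).@[z] - (F i).@[z0]) <= rho)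
  (fun i d d' _ le_dd' H z zd => H z (close_le le_dd' zd))
  (fun i => strictly_diff_cont (strictly_diff_mpoly z0 (F i)) rho_gt0).
exists (Num.min c r) => [|a a_close]; first by rewrite lt_min c_gt0 r_gt0.
have [cr_le_c cr_le_r] : Num.min c r <= c /\ Num.min c r <= r by split; rewrite ge_min lexx ?orbT.
have a_close_c i : normc (a i - a0 i) < c by apply: lt_le_trans (a_close i) cr_le_c.
have a_close_r i : normc (a i - a0 i) < r by apply: lt_le_trans (a_close i) cr_le_r.
have residual0 i : normc (F i).@[joinv a x0] <= rho.
  have x0_close j : normc (x0 j - x0 j) < c by rewrite subrr normc0.
  by have := Hc i _ (close_joinv a_close_c x0_close); rewrite F_z0 subr0.
exists (chord_limit a rho); split => [j|i].
  apply/negP => /eqP lim0.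
  have := chord_limit_near remainder_small a_close_r residual0 (ltW rho_gt0) rho_small j.
  by rewrite lim0 sub0r normcN Mrho; have := r_le_x0 j; lra.
exact: chord_limit_root remainder_small a_close_r residual0 (ltW rho_gt0) rho_small i.
Qed.

End Chord.

(* The system: a solution of g_alpha in the torus is a zero of the numerators,
   and there the x-Jacobian of g is the x-Jacobian of the numerators scaled
   row by row by the nonzero monomial factors. *)
Section System.
Variable R : realType.
Local Notation C := R[i].
Variables (l n s : nat) (g : 'I_s -> lpoly R l n).

Lemma xmon_neq0 (d : 'I_n -> nat) (x : 'I_n -> C) : torus x -> xmon d x != 0.
Proof.
move=> x_torus; rewrite /xmon; apply: (big_ind (fun y => y != 0)) => [|y y'|j _].
- exact: oner_neq0.
- exact: mulf_neq0.
- by rewrite invr_neq0 // expf_neq0 // x_torus.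
Qed.

Lemma numerator_root a x i : is_solution g a x -> (lp_num (g i)).@[joinv a x] = 0.
Proof.
move=> [x_torus sol]; have := sol i; rewrite /lpeval => /eqP.
by rewrite mulf_eq0 (negbTE (xmon_neq0 _ x_torus)) orbF => /eqP.
Qed.

Lemma jacobian_at_root a x i j : is_solution g a x ->
  jacobian_x g a x i j =
  ((lp_num (g i))^`M(rshift l j)).@[joinv a x] * xmon (lp_shift (g i)) x.
Proof. by move=> sol; rewrite mxE /lpderiv_x numerator_root // !mulr0 !mul0r subr0. Qed.

Lemma numerator_right_inverse a x : nondegenerate_solution g a x ->
  exists Q : 'I_n -> 'I_s -> C, forall i k,
    \sum_j ((lp_num (g i))^`M(rshift l j)).@[joinv a x] * Q j k = (i == k)%:R.
Proof.
move=> [sol rank_s]; pose m i := xmon (lp_shift (g i)) x.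
have m_neq0 i : m i != 0 by apply: xmon_neq0; case: sol.
have /row_freeP [B JB] : row_free (jacobian_x g a x) by rewrite /row_free rank_s.
exists (fun j k => B j k * m k) => i k.
have JBik := congr1 (fun M : 'M_s => M i k) JB; rewrite /= !mxE in JBik.
have -> : \sum_j ((lp_num (g i))^`M(rshift l j)).@[joinv a x] * (B j k * m k)
    = (\sum_j jacobian_x g a x i j * B j k) * m k / m i.
  rewrite !mulr_suml; apply: eq_bigr => j _; rewrite jacobian_at_root // -/(m i).
  by rewrite (mulrAC _ (m i)) (mulrAC _ (m i)) mulfK // mulrA.
by rewrite JBik; case: eqP => [->|_]; rewrite ?mul1r ?divff // !mul0r.
Qed.

End System.

(* The chord method applies to the
   numerators, whose x-Jacobian has a right inverse at the solution. *)
Lemma nondegenerate_local_solvability (R : realType) (l n s : nat)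
    (g : 'I_s -> lpoly R l n) a0 x0 :
  nondegenerate_solution g a0 x0 ->
  exists2 e : R, 0 < e & forall a, (forall i, normc (a i - a0 i) < e) ->
    exists x, is_solution g a x.
Proof.
move=> nd; have [sol0 _] := nd; have [x0_torus _] := sol0.
have [Q Q_right_inv] := numerator_right_inverse nd.
have [e e_gt0 solve] := chord_solve (fun i => numerator_root i sol0) Q_right_inv x0_torus.
exists e => // a a_close; have [x [x_torus roots]] := solve a a_close.
by exists x; split => // i; rewrite /lpeval roots mul0r.
Qed.

Lemma cball_normc (R : realType) m (z : 'I_m -> R[i]) e w :
  cball z e w <-> forall i, normc (w i - z i) < e.
Proof. by split => h i; have := h i; rewrite normcE ltcR. Qed.

Lemma cball_center (R : realType) m (z : 'I_m -> R[i]) e : 0 < e -> cball z e z.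
Proof. by move=> e_gt0; apply/cball_normc => i; rewrite subrr normc0. Qed.

Lemma cball_open (R : realType) m (z : 'I_m -> R[i]) e : euclid_open (cball z e).
Proof.
move=> y /cball_normc y_close.
have y_gap i : 0 < e - normc (y i - z i) by rewrite subr_gt0.
have [d d_gt0 Hd] := uniform_radius (P := fun i d => d <= e - normc (y i - z i))
  (fun i d d' _ le_dd' H => le_trans le_dd' H)
  (fun i => ex_intro2 _ _ (e - normc (y i - z i)) (y_gap i) (lexx _)).
exists d => // w /cball_normc w_close; apply/cball_normc => i.
rewrite -(subrKA (y i)); apply: le_lt_trans (le_normcD _ _) _.
by have := w_close i; have := Hd i; lra.
Qed.

Theorem mainTheorem6 (R : realType) (l n s : nat) (g : 'I_s -> lpoly R l n)
    (A : ('I_l -> R[i]) -> Prop) :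
  (exists a0, A a0 /\ exists x0, nondegenerate_solution g a0 x0) ->
  nonempty_interior_in (Dset g A) A /\
  (locally_zariski_dense A -> zariski_dense (Dset g A)).
Proof.
move=> [a0 [A_a0 [x0 nd]]].
have [e e_gt0 solve] := nondegenerate_local_solvability nd.
have ball_in_D w : cball a0 e w -> A w -> Dset g A w.
  by move=> /cball_normc w_close A_w; split => //; apply: solve.
split; first by exists a0; split => //; exists e.
move=> A_lzd p p_vanish.
have ball_dense := A_lzd _ (@cball_open _ _ a0 e) (ex_intro _ a0 (conj (cball_center a0 e_gt0) A_a0)).
by apply: ball_dense => z [z_ball A_z]; apply: p_vanish; apply: ball_in_D.
Qed.
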